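(* Let $\hat H$, $\tilde\tau>0$ and $\Phi$ be as in the context. If $(\alpha,\beta)$ lies in $$\mathcal{R}=\{(\alpha,\beta)\in\mathbb{R}^2:\ |\alpha|-1<\beta<1\},$$ then every root $w$ of $\Phi(w)=0$ satisfies $\operatorname{Re} w<0$, i.e. the equilibrium is locally asymptotically stable, regardless of the delay kernel and of $\tilde\tau>0$. Moreover $\mathcal{R}\subset\mathcal{S}=\{\alpha<2,\ \alpha-1<\beta<(\alpha-4)^2/4\}$.
   Context: Let $g:[0,\infty)\to[0,\infty)$ be a probability density with mean $\int_0^\infty t\,g(t)\,dt=1$ (or the Dirac measure at $1$), and let $\hat H(w)=\int_0^\infty g(s)e^{-ws}\,ds$; then $\hat H(0)=1$, $\hat H'(0)=-1$, and $|\hat H(w)|\le 1$ for $\operatorname{Re} w\ge 0$. The delay kernel with mean $\tau>0$ is $h(t)=\tau^{-1}g(t/\tau)$. For a time constant $\bar\tau>0$ put $\tilde\tau=\tau/\bar\tau$. For $\alpha,\beta\in\mathbb{R}$ the (rescaled) characteristic equation of the linearized coupled Wilson–Cowan system is $$\Phi(w):=(w+\tilde\tau)^4-\alpha\,\tilde\tau^2(w+\tilde\tau)^2\hat H(w)^2+\beta\,\tilde\tau^4\hat H(w)^4=0,$$ equivalently $Q(w)^2-\alpha Q(w)+\beta=0$ with $Q(w)=\big(\frac{w+\tilde\tau}{\tilde\tau\hat H(w)}\big)^2$. The equilibrium is locally asymptotically stable iff all roots have negative real part. $\mathcal{S}$ is the no-delay stability region. *)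

From HB Require Import structures.
From mathcomp Require Import all_boot all_order all_algebra.
From mathcomp Require Import all_classical all_reals all_analysis.
From mathcomp Require Import complex.
Set Implicit Arguments. Unset Strict Implicit. Unset Printing Implicit Defensive.
Import Order.TTheory GRing.Theory Num.Theory.
Local Open Scope ring_scope.
Local Open Scope classical_set_scope.
Local Open Scope complex_scope.

(* A (normalised) delay kernel g with mean 1: either a probability density
   on [0, oo) or the Dirac measure at 1. *)
Inductive delay_kernel (R : realType) :=
| Density of (R -> R)
| Dirac1.

Definition density_mean1 (R : realType) (g : R -> R) : Prop :=
  measurable_fun (`[0%R, +oo[ : set R) g /\
  (forall t : R, 0 <= t -> 0 <= g t) /\
  (\int[@lebesgue_measure R]_(t in (`[0%R, +oo[ : set R)) (g t)%:E = 1)%E /\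
  (\int[@lebesgue_measure R]_(t in (`[0%R, +oo[ : set R)) (t * g t)%:E = 1)%E.

Definition admissible (R : realType) (k : delay_kernel R) : Prop :=
  match k with
  | Density g => density_mean1 g
  | Dirac1 => True
  end.

(* Laplace transform  H^(w) = int_0^oo g(s) e^{-w s} ds, written via its
   real and imaginary parts (w = a + i b):
   e^{-ws} = e^{-as} (cos(bs) - i sin(bs)).  For the Dirac measure at 1,
   H^(w) = e^{-w}. (Meaningful for complex.Re w >= 0.) *)
Definition Hhat (R : realType) (k : delay_kernel R) (w : R[i]) : R[i] :=
  match k with
  | Density g =>
      @Complex R
        (Rintegral (@lebesgue_measure R) (`[0%R, +oo[ : set R)
           (fun s : R => g s * expR (- (complex.Re w * s)) * cos (complex.Im w * s)))
        (- Rintegral (@lebesgue_measure R) (`[0%R, +oo[ : set R)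
           (fun s : R => g s * expR (- (complex.Re w * s)) * sin (complex.Im w * s)))
  | Dirac1 =>
      @Complex R (expR (- complex.Re w) * cos (complex.Im w)) (- (expR (- complex.Re w) * sin (complex.Im w)))
  end.

Definition Phi (R : realType) (k : delay_kernel R) (tt alpha beta : R)
  (w : R[i]) : R[i] :=
  (w + tt%:C) ^+ 4
  - alpha%:C * tt%:C ^+ 2 * (w + tt%:C) ^+ 2 * Hhat k w ^+ 2
  + beta%:C * tt%:C ^+ 4 * Hhat k w ^+ 4.

Definition region_R (R : realType) (alpha beta : R) : Prop :=
  `|alpha| - 1 < beta /\ beta < 1.

Definition region_S (R : realType) (alpha beta : R) : Prop :=
  alpha < 2 /\ alpha - 1 < beta /\ beta < (alpha - 4) ^+ 2 / 4.

From HB Require Import structures.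
From mathcomp Require Import all_boot all_order all_algebra.
From mathcomp Require Import all_classical all_reals all_analysis.
From mathcomp Require Import complex measurable_realfun.
From mathcomp Require Import lra ring.
Set Implicit Arguments. Unset Strict Implicit. Unset Printing Implicit Defensive.
Import Order.TTheory GRing.Theory Num.Theory.
Local Open Scope ring_scope.

(* Suppose Phi(w) = 0 with Re w >= 0.  Put A = (w + tt)^2 and
   B = (tt Hhat(w))^2, so that A^2 - alpha A B + beta B^2 = 0.
   1. Laplace bound: |Hhat(w)| <= 1 for Re w >= 0.  For a density this is
      the inequality |int f e^{-i b s}| <= int f for a nonnegative weight
      f = g e^{-a s}, proved below for an arbitrary measure.
   2. Hence |B| <= tt^4 <= |A|, since |w + tt| >= tt when Re w >= 0.
   3. Schur-Cohn step: for (alpha, beta) in R both roots of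
      q^2 - alpha q + beta lie in the open unit disc, so A = q B forces
      |A| < |B| (A is nonzero), contradicting 2.
   The inclusion of R in the no-delay region S is elementary algebra. *)

Section WeightedRotationBound.
Variables (d : measure_display) (T : measurableType d) (R : realType).
Variables (mu : measure T R) (D : set T) (f c s : T -> R).
Hypothesis mD : measurable D.
Hypothesis f_ge0 : forall x, D x -> 0 <= f x.
Hypothesis cs_le1 : forall x, D x -> c x ^+ 2 + s x ^+ 2 <= 1.
Hypothesis f_int : mu.-integrable D (EFin \o f).
Hypothesis fc_int : mu.-integrable D (EFin \o (fun x => f x * c x)).
Hypothesis fs_int : mu.-integrable D (EFin \o (fun x => f x * s x)).

Lemma planar_projection_le (C S u v : R) : u ^+ 2 + v ^+ 2 <= 1 ->
  C * u + S * v <= Num.sqrt (C ^+ 2 + S ^+ 2).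
Proof.
move=> uv1; apply: (le_trans (ler_norm _)).
rewrite -sqrtr_sqr ler_sqrt; last by rewrite addr_ge0 // sqr_ge0.
have lagrange : (C ^+ 2 + S ^+ 2) * (u ^+ 2 + v ^+ 2) - (C * u + S * v) ^+ 2
    = (C * v - S * u) ^+ 2 by ring.
have := sqr_ge0 (C * v - S * u); rewrite -lagrange subr_ge0 => /le_trans; apply.
by rewrite ler_piMr // addr_ge0 // sqr_ge0.
Qed.

Lemma integrable_scale (g : T -> R) (r : R) : mu.-integrable D (EFin \o g) ->
  mu.-integrable D (EFin \o (fun x => r * g x)).
Proof.
move=> gi; have -> : EFin \o (fun x => r * g x) = (fun x => r%:E * (EFin \o g) x)%E.
  by apply: funext => x /=; rewrite EFinM.
exact: integrableZl.
Qed.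

Lemma weighted_rotation_bound :
  (\int[mu]_(x in D) (f x * c x)) ^+ 2 + (\int[mu]_(x in D) (f x * s x)) ^+ 2
  <= (\int[mu]_(x in D) f x) ^+ 2.
Proof.
set C := \int[mu]_(x in D) (f x * c x); set S := \int[mu]_(x in D) (f x * s x).
set I := \int[mu]_(x in D) f x; set N := Num.sqrt (C ^+ 2 + S ^+ 2).
have N_ge0 : 0 <= N := sqrtr_ge0 _.
have I_ge0 : 0 <= I := Rintegral_ge0 _ f_ge0.
have NN : N ^+ 2 = C ^+ 2 + S ^+ 2 by rewrite sqr_sqrtr // addr_ge0 // sqr_ge0.
have comb_int : mu.-integrable D
    (EFin \o (fun x => C * (f x * c x) + S * (f x * s x))).
  have -> : EFin \o (fun x => C * (f x * c x) + S * (f x * s x)) =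
      ((EFin \o (fun x => C * (f x * c x))%R) \+
       (EFin \o (fun x => S * (f x * s x))%R))%E.
    by apply: funext => x /=; rewrite EFinD.
  by apply: integrableD => //; apply: integrable_scale.
(* N^2 = C int f c + S int f s = int f (C c + S s) <= int f N = N I *)
have N2_le : N ^+ 2 <= N * I.
  rewrite NN !expr2 {1}/C {1}/S -!RintegralZl // -RintegralD //;
    try exact: integrable_scale.
  apply: le_Rintegral => //; first exact: integrable_scale.
  move=> x Dx; have proj := planar_projection_le C S (cs_le1 Dx).
  have -> : C * (f x * c x) + S * (f x * s x) = f x * (C * c x + S * s x) by ring.
  by rewrite [N * _]mulrC ler_wpM2l ?(f_ge0 Dx).
by rewrite -NN; nra.
Qed.

End WeightedRotationBound.

Section LaplaceBound.
Local Open Scope classical_set_scope.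
Variable R : realType.
Notation mu := (@lebesgue_measure R).
Notation D := (`[0%R, +oo[ : set R).

Lemma halfline_ge0 {s : R} : D s -> 0 <= s.
Proof. by rewrite /= in_itv /= andbT. Qed.

Lemma measurable_dilate (h : R -> R) (c : R) : measurable_fun setT h ->
  measurable_fun D (fun s => h (c * s)).
Proof.
move=> mh; apply: measurable_funTS.
by apply: (measurableT_comp (f := h) (g := fun s => c * s)) => //; exact: measurable_funM.
Qed.

Section Density.
Variable g : R -> R.
Hypothesis dg : density_mean1 g.

Lemma density_ge0 {s : R} : D s -> 0 <= g s.
Proof. by case: dg => _ [g0 _] /halfline_ge0; exact: g0. Qed.

Lemma density_integrable : mu.-integrable D (EFin \o g).
Proof.
case: dg => mg [_ [mass1 _]]; apply/integrableP; split; first exact/measurable_EFinP.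
rewrite (_ : (\int[mu]_(x in D) `|(EFin \o g) x|)%E = (\int[mu]_(x in D) (g x)%:E)%E).
  by rewrite mass1 ltry.
apply: eq_integral => x; rewrite inE => Dx.
by rewrite /= ger0_norm // density_ge0.
Qed.

Lemma density_mass : \int[mu]_(x in D) g x = 1.
Proof. by case: dg => _ [_ [mass1 _]]; rewrite /Rintegral mass1. Qed.

Lemma density_bounded_integrable (h : R -> R) : measurable_fun D h ->
  (forall s, D s -> `|h s| <= 1) -> mu.-integrable D (EFin \o (fun s => g s * h s)).
Proof.
move=> mh h_le1; apply: (le_integrable _ _ _ density_integrable) => //.
  by apply/measurable_EFinP; apply: measurable_funM => //; case: dg.
move=> x Dx /=; rewrite lee_fin normrM (ger0_norm (density_ge0 Dx)).
by rewrite ler_piMr ?density_ge0 ?h_le1.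
Qed.

Lemma Hhat_density_sqnorm_le1 (a b : R) : 0 <= a ->
  (\int[mu]_(s in D) (g s * expR (- (a * s)) * cos (b * s))) ^+ 2 +
  (\int[mu]_(s in D) (g s * expR (- (a * s)) * sin (b * s))) ^+ 2 <= 1.
Proof.
move=> a_ge0; set e := fun s => expR (- (a * s)).
have e_ge0 s : 0 <= e s := expR_ge0 _.
have e_le1 s : D s -> e s <= 1.
  by move=> /halfline_ge0 s0; rewrite expR_le1 oppr_le0 mulr_ge0.
have me : measurable_fun D e.
  apply: (@measurable_dilate (fun s => expR (- s))).
  by apply: measurableT_comp => //; exact: measurable_funN.
have damped_integrable (t : R -> R) : measurable_fun D t ->
    (forall s, `|t s| <= 1) -> mu.-integrable D (EFin \o (fun s => g s * e s * t s)).
  move=> mt t_le1.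
  have -> : (fun s => g s * e s * t s) = (fun s => g s * (e s * t s)).
    by apply: funext => s; rewrite mulrA.
  apply: density_bounded_integrable; first exact: measurable_funM.
  move=> s Ds; rewrite normrM ger0_norm // -[1]mulr1.
  by rewrite ler_pM ?e_le1 ?t_le1.
have mcos : measurable_fun D (fun s => cos (b * s)).
  by apply: measurable_dilate; apply: continuous_measurable_fun; exact: continuous_cos.
have msin : measurable_fun D (fun s => sin (b * s)).
  by apply: measurable_dilate; apply: continuous_measurable_fun; exact: continuous_sin.
have ge_int : mu.-integrable D (EFin \o (fun s => g s * e s)).
  apply: density_bounded_integrable => // s Ds; rewrite ger0_norm ?e_le1 //.
have mass_le1 : \int[mu]_(s in D) (g s * e s) <= 1.
  rewrite -density_mass; apply: le_Rintegral => //; first exact: density_integrable.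
  by move=> s Ds; rewrite ler_piMr ?density_ge0 ?e_le1.
have mass_ge0 : 0 <= \int[mu]_(s in D) (g s * e s).
  by apply: Rintegral_ge0 => s Ds; rewrite mulr_ge0 ?density_ge0.
apply: (le_trans (@weighted_rotation_bound _ _ _ mu D (fun s => g s * e s)
  (fun s => cos (b * s)) (fun s => sin (b * s)) _ _ _ _ _ _)) => //.
- by move=> s Ds; rewrite mulr_ge0 ?density_ge0.
- by move=> s _; rewrite cos2Dsin2.
- by apply: damped_integrable => // s; exact: cos_max.
- by apply: damped_integrable => // s; exact: sin_max.
- by rewrite expr2 -[1]mulr1 ler_pM.
Qed.

End Density.
End LaplaceBound.

Section CharacteristicRoots.
Local Open Scope complex_scope.
Variable R : realType.

Definition sqmod (z : R[i]) : R := complex.Re z ^+ 2 + complex.Im z ^+ 2.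

Lemma sqmodM (z1 z2 : R[i]) : sqmod (z1 * z2) = sqmod z1 * sqmod z2.
Proof. by case: z1 => a b; case: z2 => c d; rewrite /sqmod /=; ring. Qed.

Lemma sqmodX (z : R[i]) (n : nat) : sqmod (z ^+ n) = sqmod z ^+ n.
Proof.
elim: n => [|n IHn]; first by rewrite /sqmod /= expr0n addr0 expr1n.
by rewrite !exprS sqmodM IHn.
Qed.

Lemma sqmod_ge0 (z : R[i]) : 0 <= sqmod z.
Proof. by rewrite addr_ge0 // sqr_ge0. Qed.

Lemma sqmod_gt0 (z : R[i]) : z != 0 -> 0 < sqmod z.
Proof.
case: z => a b nz; rewrite lt_def sqmod_ge0 andbT /sqmod /=.
by apply: contra nz; rewrite paddr_eq0 ?sqr_ge0 // !sqrf_eq0 => /andP[/eqP-> /eqP->].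
Qed.

Lemma sqmod_real (t : R) : sqmod t%:C = t ^+ 2.
Proof. by rewrite /sqmod /= expr0n addr0. Qed.

Lemma sqmod_shift_ge (w : R[i]) (t : R) : 0 <= complex.Re w -> 0 <= t ->
  t ^+ 2 <= sqmod (w + t%:C).
Proof.
case: w => a b /= a_ge0 t_ge0; rewrite /sqmod /=.
by have := sqr_ge0 b; rewrite !expr2; nra.
Qed.

Lemma quadratic_root_in_disc (alpha beta : R) (q : R[i]) :
  region_R alpha beta -> q ^+ 2 - alpha%:C * q + beta%:C = 0 -> sqmod q < 1.
Proof.
case: q => x y [lo hi] root.
have re_eq : x ^+ 2 - y ^+ 2 - alpha * x + beta = 0.
  by rewrite -[RHS]/(complex.Re 0) -root /=; ring.
have im_eq : y * (2 * x - alpha) = 0.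
  by rewrite -[RHS]/(complex.Im 0) -root /=; ring.
rewrite /sqmod /=.
have [alpha_le alpha_ge] : alpha <= `|alpha| /\ - alpha <= `|alpha|.
  by split; [exact: ler_norm | rewrite -normrN; exact: ler_norm].
move/eqP: im_eq; rewrite mulf_eq0 => /orP[/eqP y0 | /eqP centre]; last first.
  (* a pair of conjugate non-real roots: alpha = 2 x and |q|^2 = beta *)
  have alpha_x : alpha = 2 * x by lra.
  by move: re_eq; rewrite alpha_x !expr2; nra.
rewrite y0 expr0n addr0; apply/negPn/negP; rewrite -leNgt => x2_ge1.
have [x_ge1 | x_le_m1] : 1 <= x \/ x <= -1.
  case: (lerP 1 x) => [x_ge1 | x_lt1]; first by left.
  by right; rewrite expr2 in x2_ge1; nra.
- have : 0 <= (x - 1) * (x - beta) by apply: mulr_ge0; lra.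
  by move: re_eq; rewrite y0 !expr2; nra.
- have : 0 <= (- x - 1) * (- x - beta) by apply: mulr_ge0; lra.
  by move: re_eq; rewrite y0 !expr2; nra.
Qed.

Lemma homogeneous_root_lt (alpha beta : R) (A B : R[i]) :
  region_R alpha beta -> A ^+ 2 - alpha%:C * A * B + beta%:C * B ^+ 2 = 0 ->
  A != 0 -> sqmod A < sqmod B.
Proof.
move=> reg root A_neq0.
have B_neq0 : B != 0.
  apply: contra A_neq0 => /eqP B0.
  by move: root; rewrite B0 mulr0 expr0n /= mulr0 subr0 addr0 => /eqP; rewrite sqrf_eq0.
have q_root : (A / B) ^+ 2 - alpha%:C * (A / B) + beta%:C = 0.
  have : ((A / B) ^+ 2 - alpha%:C * (A / B) + beta%:C) * B ^+ 2 = 0.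
    by rewrite -root; field.
  by move/eqP; rewrite mulf_eq0 expf_eq0 (negbTE B_neq0) andbF orbF => /eqP.
have q_in_disc := quadratic_root_in_disc reg q_root.
rewrite -(divfK B_neq0 A) sqmodM -[X in _ < X]mul1r.
by rewrite ltr_pM2r // sqmod_gt0.
Qed.

Lemma Hhat_sqmod_le1 (k : delay_kernel R) (w : R[i]) :
  admissible k -> 0 <= complex.Re w -> sqmod (Hhat k w) <= 1.
Proof.
case: k => [g|] /= adm Re_ge0; rewrite /sqmod /= sqrrN.
  exact: Hhat_density_sqnorm_le1.
rewrite !exprMn -mulrDr cos2Dsin2 mulr1.
by rewrite exprn_ile1 ?expR_ge0 // expR_le1 oppr_le0.
Qed.

Lemma Phi_root_Re_lt0 (k : delay_kernel R) (tt alpha beta : R) (w : R[i]) :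
  admissible k -> 0 < tt -> region_R alpha beta ->
  Phi k tt alpha beta w = 0 -> complex.Re w < 0.
Proof.
move=> adm tt_gt0 reg root; rewrite ltNge; apply/negP => Re_ge0.
set X := w + tt%:C; set Y := tt%:C * Hhat k w.
have form : (X ^+ 2) ^+ 2 - alpha%:C * X ^+ 2 * Y ^+ 2 + beta%:C * (Y ^+ 2) ^+ 2 = 0.
  by rewrite -root /Phi /X /Y; ring.
have X_large : tt ^+ 2 <= sqmod X := sqmod_shift_ge Re_ge0 (ltW tt_gt0).
have Y_small : sqmod Y <= tt ^+ 2.
  by rewrite sqmodM sqmod_real ler_piMr ?sqr_ge0 ?Hhat_sqmod_le1.
have X2_neq0 : X ^+ 2 != 0.
  rewrite expf_neq0 //; apply: contraTneq X_large => ->.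
  by rewrite -ltNge /sqmod /= expr0n addr0 exprn_gt0.
have := homogeneous_root_lt reg form X2_neq0.
rewrite !sqmodX; apply/negP; rewrite -leNgt lerXn2r ?nnegrE ?sqmod_ge0 //.
exact: le_trans Y_small X_large.
Qed.

End CharacteristicRoots.

Lemma region_R_sub_S (R : realType) (alpha beta : R) :
  region_R alpha beta -> region_S alpha beta.
Proof.
move=> [lo hi]; have alpha_le := ler_norm alpha.
have alpha_lt2 : alpha < 2 by lra.
split=> //; split; first by lra.
by rewrite ltr_pdivlMr // expr2; nra.
Qed.

Theorem theorem5 (R : realType) :
  (forall (k : delay_kernel R) (tt alpha beta : R),
      admissible k -> 0 < tt -> region_R alpha beta ->
      forall w : R[i], Phi k tt alpha beta w = 0 -> complex.Re w < 0) /\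
  (forall alpha beta : R, region_R alpha beta -> region_S alpha beta).
Proof.
split; last exact: region_R_sub_S.
move=> k tt alpha beta adm tt_gt0 reg w; exact: Phi_root_Re_lt0.
Qed.
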